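(* Let $K$ be a field, $\mathcal A$ a $K$-algebra, $\vartheta$ any one of the four types (left, right, pre-two-sided, two-sided), and $M$ a $\vartheta$-Mathieu subspace of $\mathcal A$. Let $a\in\mathcal A$ be algebraic over $K$ with $a^m\in M$ for all $m\ge 1$, and let $k\ge 0$ be the multiplicity of $0\in K$ as a root of the minimal polynomial of $a$ over $K$. Then $(a^k)_\vartheta\subseteq M$. In particular, for $\vartheta\neq$ pre-two-sided, the $\vartheta$-ideal of $\mathcal A$ generated by $a^k$ is contained in $M$.
   Context: All algebras are associative and unital. Let $M$ be a $K$-subspace of $\mathcal A$. $M$ is a left (resp. right) Mathieu subspace if whenever $a\in\mathcal A$ satisfies $a^m\in M$ for all $m\ge1$, then for every $b\in\mathcal A$ there is $N$ with $ba^m\in M$ (resp. $a^mb\in M$) for all $m\ge N$. $M$ is a pre-two-sided Mathieu subspace if it is both a left and a right Mathieu subspace. $M$ is a two-sided Mathieu subspace if whenever $a^m\in M$ for all $m\ge1$, then for all $b,c\in\mathcal A$ there is $N$ with $ba^mc\in M$ for all $m\ge N$. A $\vartheta$-Mathieu subspace is one of the type $\vartheta$. A $\vartheta$-ideal means a left ideal if $\vartheta$ = left, a right ideal if $\vartheta$ = right, and a two-sided ideal if $\vartheta$ is pre-two-sided or two-sided. For $x\in\mathcal A$: $(x)_\vartheta$ is the left ideal $\mathcal Ax$ if $\vartheta$ = left, the right ideal $x\mathcal A$ if $\vartheta$ = right, the two-sided ideal generated by $x$ if $\vartheta$ = two-sided, and $x\mathcal A+\mathcal Ax$ if $\vartheta$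 = pre-two-sided. *)

From HB Require Import structures.
From mathcomp Require Import all_boot all_order all_algebra.
Set Implicit Arguments. Unset Strict Implicit. Unset Printing Implicit Defensive.
Import GRing.Theory.
Local Open Scope ring_scope.

Inductive mtype := MLeft | MRight | MPreTwo | MTwo.

Section Mathieu.
Variables (K : fieldType) (A : algType K).

Definition all_powers_in (M : {pred A}) (a : A) : Prop :=
  forall m : nat, (1 <= m)%N -> a ^+ m \in M.

Definition left_Mathieu (M : {pred A}) : Prop :=
  forall a : A, all_powers_in M a ->
    forall b : A, exists N : nat, forall m : nat, (N <= m)%N -> b * a ^+ m \in M.

Definition right_Mathieu (M : {pred A}) : Prop :=
  forall a : A, all_powers_in M a ->
    forall b : A, exists N : nat, forall m : nat, (N <= m)%N -> a ^+ m * b \in M.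

Definition pre_two_sided_Mathieu (M : {pred A}) : Prop :=
  left_Mathieu M /\ right_Mathieu M.

Definition two_sided_Mathieu (M : {pred A}) : Prop :=
  forall a : A, all_powers_in M a ->
    forall b c : A, exists N : nat, forall m : nat, (N <= m)%N -> b * a ^+ m * c \in M.

Definition Mathieu (t : mtype) (M : {pred A}) : Prop :=
  match t with
  | MLeft => left_Mathieu M
  | MRight => right_Mathieu M
  | MPreTwo => pre_two_sided_Mathieu M
  | MTwo => two_sided_Mathieu M
  end.

Definition gen_set (t : mtype) (x : A) (y : A) : Prop :=
  match t with
  | MLeft => exists b : A, y = b * x
  | MRight => exists b : A, y = x * b
  | MPreTwo => exists b c : A, y = x * b + c * x
  | MTwo => exists s : seq (A * A), y = \sum_(bc <- s) bc.1 * x * bc.2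
  end.

Definition is_minpoly (a : A) (p : {poly K}) : Prop :=
  [/\ p \is monic, horner_alg a p = 0 &
      forall q : {poly K}, q != 0 -> horner_alg a q = 0 -> (size p <= size q)%N].

Definition algebraic_over (a : A) : Prop :=
  exists2 q : {poly K}, q != 0 & horner_alg a q = 0.

End Mathieu.

From HB Require Import structures.
From mathcomp Require Import all_boot all_order all_algebra.
From mathcomp Require Import ring.
Set Implicit Arguments.
Unset Strict Implicit.
Unset Printing Implicit Defensive.
Import GRing.Theory.
Local Open Scope ring_scope.

(* Write p = q * X^k with k = mup 0 p and q(0) != 0.  Then q and X^m are
   coprime, so a Bezout identity multiplied by X^k gives
   X^k = u * X^(k+m) + v * p; evaluating at a, where p vanishes, shows that
   a^k lies in K[a] a^(k+m) for every m.  Hence b a^k c is a linear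
   combination of the b a^n c with n >= m, which all lie in M for m large by
   the Mathieu property. *)

Section RootPowerAtZero.
Variable K : fieldType.

Lemma mup0_factor (p : {poly K}) :
  p != 0 -> exists2 q, ~~ root q 0 & p = q * 'X^(mup 0 p).
Proof.
move=> p_neq0; have [m [q]] := multiplicity_XsubC p 0.
rewrite p_neq0 /= => q0_neq0 def_p; exists q => //.
by rewrite def_p mupMr // mup_XsubCX eqxx subr0.
Qed.

Lemma Xmup0_Bezout (p : {poly K}) (m : nat) : p != 0 ->
  exists u v, 'X^(mup 0 p) = u * 'X^(mup 0 p + m) + v * p.
Proof.
move=> /mup0_factor; set k := mup 0 p => -[q q0_neq0 def_p].
have /Bezout_eq1_coprimepP[[v u] /= Buv] : coprimep q ('X^m).
  by apply: coprimep_expr; rewrite coprimepX.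
exists u, v; rewrite def_p exprD -[LHS]mul1r -Buv; ring.
Qed.

Variable A : algType K.

Lemma annihilated_power_mup0 (a : A) (p : {poly K}) (m : nat) :
  p != 0 -> horner_alg a p = 0 ->
  exists s : {poly K}, a ^+ mup 0 p = horner_alg a s * a ^+ (mup 0 p + m).
Proof.
move=> p_neq0 pa0; have [u [v def_Xk]] := Xmup0_Bezout m p_neq0.
exists u; have /(congr1 (horner_alg a)) := def_Xk.
by rewrite rmorphD !rmorphM /= pa0 mulr0 addr0 !rmorphXn /= horner_algX.
Qed.

End RootPowerAtZero.

Section MathieuPowers.
Variables (K : fieldType) (A : algType K) (M : {pred A}).
Hypothesis M_submod : submod_closed M.
HB.instance Definition _ := GRing.isSubmodClosed.Build K A M M_submod.

Lemma sandwich_tail_span (a b c : A) (N : nat) :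
  (forall n, (N <= n)%N -> b * a ^+ n * c \in M) ->
  forall s : {poly K}, b * (horner_alg a s * a ^+ N) * c \in M.
Proof.
move=> tailM s; elim/poly_ind: s N tailM => [|s d IHs] N tailM.
  by rewrite rmorph0 !(mul0r, mulr0) rpred0.
have -> : horner_alg a (s * 'X + d%:P) * a ^+ N
          = horner_alg a s * a ^+ N.+1 + d *: a ^+ N.
  rewrite rmorphD rmorphM /= horner_algX horner_algC mulrDl -mulrA -exprS.
  by rewrite mulr_algl.
rewrite mulrDr mulrDl -scalerAr -scalerAl rpredD ?rpredZ ?tailM //.
by apply: IHs => n /ltnW; apply: tailM.
Qed.

Lemma sandwich_power_mup0 (a b c : A) (p : {poly K}) :
  p != 0 -> horner_alg a p = 0 ->
  (exists N, forall n, (N <= n)%N -> b * a ^+ n * c \in M) ->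
  b * a ^+ mup 0 p * c \in M.
Proof.
move=> p_neq0 pa0 [N tailM]; have [s ->] := annihilated_power_mup0 N p_neq0 pa0.
apply: sandwich_tail_span => n le_kN_n.
exact: tailM (leq_trans (leq_addl _ _) le_kN_n).
Qed.

Lemma gen_set_mup0_sub (t : mtype) (a : A) (p : {poly K}) :
  Mathieu t M -> all_powers_in M a -> p != 0 -> horner_alg a p = 0 ->
  forall y, gen_set t (a ^+ mup 0 p) y -> y \in M.
Proof.
move=> MathM powM p_neq0 pa0.
have leftM b : left_Mathieu M -> b * a ^+ mup 0 p \in M.
  move=> LM; rewrite -[_ * _]mulr1; apply: sandwich_power_mup0 p_neq0 pa0 _.
  by have [N tailM] := LM a powM b; exists N => n /tailM; rewrite mulr1.
have rightM c : right_Mathieu M -> a ^+ mup 0 p * c \in M.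
  move=> RM; rewrite -[_ * c]mul1r mulrA; apply: sandwich_power_mup0 p_neq0 pa0 _.
  by have [N tailM] := RM a powM c; exists N => n /tailM; rewrite mul1r.
case: t MathM => /= [LM|RM|[LM RM]|TM] y.
- by case=> b ->; apply: leftM.
- by case=> c ->; apply: rightM.
- by case=> [b [c ->]]; rewrite rpredD ?leftM ?rightM.
case=> s ->; apply: rpred_sum => -[b c] _ /=.
exact: sandwich_power_mup0 p_neq0 pa0 (TM a powM b c).
Qed.

End MathieuPowers.

Theorem theorem3p9 (K : fieldType) (A : algType K) (t : mtype) (M : {pred A})
  (hM : submod_closed M) (hMath : Mathieu t M)
  (a : A) (halg : algebraic_over a) (hpow : all_powers_in M a)
  (p : {poly K}) (hp : is_minpoly a p) :
  forall y : A, gen_set t (a ^+ mup 0 p) y -> y \in M.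
Proof.
case: hp => p_monic pa0 _.
exact: gen_set_mup0_sub hM _ _ _ hMath hpow (monic_neq0 p_monic) pa0.
Qed.
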